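(* Let $0\to A\to B\xrightarrow{g} C\to 0$ be a short exact sequence of abelian groups with $C$ torsion-free and $B/nB$ finite for every $n\in\mathbb Z_{>0}$, considered as a three-sorted structure as described below. If $X\subseteq B$ is definable, then there is $n\in\mathbb Z_{>0}$ such that $X$ is almost saturated with respect to the quotient map $B\to B/nA$.
   Context: The structure has three sorts $A$, $B$, $C$, the group language $(+,0,-)$ on $B$, the maps $A\to B$ and $g:B\to C$, arbitrary additional constants, relations and functions on $A$ and on $C$ (extending their group languages), and for each $n\in\mathbb Z_{>0}$ a predicate interpreted as $nB$. (Motivating example: $1\to k^\times\to RV\to\Gamma\to 0$ for a valued field, with field structure on $k$ and ordered group structure on $\Gamma$.) A definable set $Z\subseteq X$ is almost saturated with respect to a map $f:X\to Y$ if $f(Z)\cap f(X\setminus Z)$ is finite. *)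

From HB Require Import structures.
From mathcomp Require Import all_boot all_algebra.
Set Implicit Arguments. Unset Strict Implicit. Unset Printing Implicit Defensive.
Import GRing.Theory.
Local Open Scope ring_scope.

(* An arbitrary first-order language (function and relation symbols with
   arities) interpreted on a carrier T; constants are 0-ary function symbols. *)
Record lang (T : Type) := Lang {
  fsym : Type;
  farity : fsym -> nat;
  finterp : forall f : fsym, ('I_(farity f) -> T) -> T;
  rsym : Type;
  rarity : rsym -> nat;
  rinterp : forall r : rsym, ('I_(rarity r) -> T) -> Prop
}.

Section ThreeSorted.
Variables (TA TB TC : zmodType) (iota : TA -> TB) (g : TB -> TC)
          (LA : lang TA) (LC : lang TC).

Inductive termA :=
| VA of nat | ZA | AddA of termA & termA | OppA of termA
| FunA (f : fsym LA) of ('I_(farity f) -> termA).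

Inductive termB :=
| VB of nat | ZB | AddB of termB & termB | OppB of termB
| IotaB of termA.

Inductive termC :=
| VC of nat | ZC | AddC of termC & termC | OppC of termC
| FunC (f : fsym LC) of ('I_(farity f) -> termC)
| GC of termB.

Inductive formula :=
| FFalse
| FEqA of termA & termA
| FEqB of termB & termB
| FEqC of termC & termC
| FRelA (r : rsym LA) of ('I_(rarity r) -> termA)
| FRelC (r : rsym LC) of ('I_(rarity r) -> termC)
| FDivB of nat & termB   (* FDivB n t : t lies in (n+1)B *)
| FNot of formula
| FAnd of formula & formula
| FOr of formula & formula
| FImp of formula & formula
| FExA of nat & formula | FExB of nat & formula | FExC of nat & formula
| FAllA of nat & formula | FAllB of nat & formula | FAllC of nat & formula.

Definition upd (T : Type) (e : nat -> T) (n : nat) (x : T) : nat -> T :=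
  fun m => if m == n then x else e m.

Fixpoint evalA (eA : nat -> TA) (t : termA) : TA :=
  match t with
  | VA n => eA n
  | ZA => 0
  | AddA t1 t2 => evalA eA t1 + evalA eA t2
  | OppA t1 => - evalA eA t1
  | FunA f args => finterp (fun i => evalA eA (args i))
  end.

Fixpoint evalB (eA : nat -> TA) (eB : nat -> TB) (t : termB) : TB :=
  match t with
  | VB n => eB n
  | ZB => 0
  | AddB t1 t2 => evalB eA eB t1 + evalB eA eB t2
  | OppB t1 => - evalB eA eB t1
  | IotaB s => iota (evalA eA s)
  end.

Fixpoint evalC (eA : nat -> TA) (eB : nat -> TB) (eC : nat -> TC)
  (t : termC) : TC :=
  match t with
  | VC n => eC n
  | ZC => 0
  | AddC t1 t2 => evalC eA eB eC t1 + evalC eA eB eC t2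
  | OppC t1 => - evalC eA eB eC t1
  | FunC f args => finterp (fun i => evalC eA eB eC (args i))
  | GC s => g (evalB eA eB s)
  end.

Fixpoint holds (phi : formula) (eA : nat -> TA) (eB : nat -> TB)
  (eC : nat -> TC) : Prop :=
  match phi with
  | FFalse => False
  | FEqA s t => evalA eA s = evalA eA t
  | FEqB s t => evalB eA eB s = evalB eA eB t
  | FEqC s t => evalC eA eB eC s = evalC eA eB eC t
  | FRelA r args => rinterp (fun i => evalA eA (args i))
  | FRelC r args => rinterp (fun i => evalC eA eB eC (args i))
  | FDivB n t => exists b : TB, evalB eA eB t = b *+ n.+1
  | FNot p => ~ holds p eA eB eC
  | FAnd p q => holds p eA eB eC /\ holds q eA eB eC
  | FOr p q => holds p eA eB eC \/ holds q eA eB eC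
  | FImp p q => holds p eA eB eC -> holds q eA eB eC
  | FExA n p => exists a : TA, holds p (upd eA n a) eB eC
  | FExB n p => exists b : TB, holds p eA (upd eB n b) eC
  | FExC n p => exists c : TC, holds p eA eB (upd eC n c)
  | FAllA n p => forall a : TA, holds p (upd eA n a) eB eC
  | FAllB n p => forall b : TB, holds p eA (upd eB n b) eC
  | FAllC n p => forall c : TC, holds p eA eB (upd eC n c)
  end.

(* X ⊆ B is definable (with parameters): it is defined by a formula in the
   B-variable 0, the other variables being assigned fixed parameters. *)
Definition definableB (X : TB -> Prop) : Prop :=
  exists (phi : formula) (pA : nat -> TA) (pB : nat -> TB) (pC : nat -> TC),
    forall b : TB, X b <-> holds phi pA (upd pB 0 b) pC.

End ThreeSorted.

Definition finite_quot_nB (TB : zmodType) (n : nat) : Prop :=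
  exists s : seq TB, forall b : TB, exists2 c, c \in s & exists d : TB, b - c = d *+ n.

(* Z ⊆ T is almost saturated w.r.t. the quotient map by the equivalence E:
   f(Z) ∩ f(T \ Z) is finite, i.e. the E-classes meeting both Z and its
   complement are covered by finitely many classes. *)
Definition almost_saturated_rel (T : eqType) (E : T -> T -> Prop)
  (Z : T -> Prop) : Prop :=
  exists s : seq T, forall x y : T, Z x -> ~ Z y -> E x y ->
    exists2 c, c \in s & E x c.

Definition cong_nA (TA TB : zmodType) (iota : TA -> TB) (n : nat)
  (x y : TB) : Prop := exists a : TA, x - y = iota (a *+ n).

(* Call two assignments eB, eB' of the B-variables 0..V-1 related at level (K, M) if
   eB'_i = eB_i + M a_i with a_i in A such that sum v_i a_i = 0 for every integer vector
   v with |v_i| <= K and g (sum v_i eB_i) = 0. Related assignments satisfy the same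
   formulas of complexity c once K and M are large enough in terms of c: the C-sort
   only sees g eB = g eB', an equation of B-terms only sees bounded integer
   combinations, divisibility predicates only see multiples of M, and a B-quantifier
   is handled by a back-and-forth step that shrinks K and divides M by a factorial.
   If x = y mod nA, the assignments x, y (followed by the parameters) are related
   unless x satisfies some bounded relation modulo A with nonzero coefficient at x.
   Since C is torsion-free, each such relation confines x to a single coset of A, and
   A/nA is finite since A meets nB in nA and B/nB is finite; hence only finitely many
   classes mod nA meet both X and its complement. *)

From HB Require Import structures.
From mathcomp Require Import all_boot all_algebra.
From mathcomp Require Import zify.
From Stdlib Require Import FunctionalExtensionality Classical.
Set Implicit Arguments. Unset Strict Implicit. Unset Printing Implicit Defensive.
Import GRing.Theory Num.Theory.
Local Open Scope ring_scope.

Definition lincomb (T : zmodType) (V : nat) (v : nat -> int) (e : nat -> T) : T :=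
  \sum_(i < V) e i *~ v i.

Definition bounded (V K : nat) (v : nat -> int) : Prop :=
  forall i, (i < V)%N -> (`|v i| <= K)%N.

Section LinearCombinations.
Variables (T : zmodType) (V : nat).
Implicit Types (e : nat -> T) (v w : nat -> int).

Lemma eq_lincombl v w e : (forall i, (i < V)%N -> v i = w i) ->
  lincomb V v e = lincomb V w e.
Proof. by move=> vw; apply: eq_bigr => i _; rewrite vw. Qed.

Lemma lincombDl v w e :
  lincomb V (fun i => v i + w i) e = lincomb V v e + lincomb V w e.
Proof. by rewrite /lincomb -big_split; apply: eq_bigr => i _; rewrite mulrzDr. Qed.

Lemma lincombBl v w e :
  lincomb V (fun i => v i - w i) e = lincomb V v e - lincomb V w e.
Proof. by rewrite /lincomb -sumrB; apply: eq_bigr => i _; rewrite mulrzBr. Qed.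

Lemma lincombNl v e : lincomb V (fun i => - v i) e = - lincomb V v e.
Proof. by rewrite /lincomb -sumrN; apply: eq_bigr => i _; rewrite mulrNz. Qed.

Lemma lincombMzl (q : int) v e :
  lincomb V (fun i => q * v i) e = lincomb V v e *~ q.
Proof. by rewrite /lincomb mulrz_suml; apply: eq_bigr => i _; rewrite mulrC mulrzA. Qed.

Lemma eq_lincombr v e e' : (forall i, (i < V)%N -> e i = e' i) ->
  lincomb V v e = lincomb V v e'.
Proof. by move=> ee'; apply: eq_bigr => i _; rewrite ee'. Qed.

Lemma lincombNr v e : lincomb V v (fun i => - e i) = - lincomb V v e.
Proof. by rewrite /lincomb -sumrN; apply: eq_bigr => i _; rewrite mulNrz. Qed.

Lemma lincombMnr v e (L : nat) :
  lincomb V v (fun i => e i *+ L) = lincomb V v e *+ L.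
Proof. by rewrite /lincomb -sumrMnl; apply: eq_bigr => i _; rewrite !pmulrn mulrzAC. Qed.

Lemma lincomb0l e : lincomb V (fun _ => 0) e = 0.
Proof. by rewrite /lincomb big1 // => i _; rewrite mulr0z. Qed.

Lemma lincomb0r v : lincomb V v (fun _ => 0 : T) = 0.
Proof. by rewrite /lincomb big1 // => i _; rewrite mul0rz. Qed.

Lemma lincomb_delta e n : (n < V)%N -> lincomb V (fun i => (i == n)%:Z) e = e n.
Proof.
move=> nV; rewrite /lincomb (bigD1 (Ordinal nV)) //= eqxx big1 ?addr0 // => i ni.
by rewrite (_ : (i == n :> nat) = false) ?mulr0z //; apply: negbTE; rewrite -val_eqE in ni.
Qed.

Lemma lincomb_upd v e j x : (j < V)%N ->
  lincomb V v (upd e j x) = lincomb V (upd v j 0) e + x *~ v j.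
Proof.
move=> jV; rewrite /lincomb (bigD1 (Ordinal jV)) //= [in RHS](bigD1 (Ordinal jV)) //=.
rewrite /upd eqxx mulr0z add0r addrC; congr (_ + _); apply: eq_bigr => i ij.
by rewrite (_ : (i == j :> nat) = false) //; apply: negbTE; rewrite -val_eqE in ij.
Qed.

Lemma lincomb_upd0 v e j x : v j = 0 -> lincomb V v (upd e j x) = lincomb V v e.
Proof.
by move=> vj; apply: eq_bigr => i _; rewrite /upd; case: eqP => // ->; rewrite vj !mulr0z.
Qed.

End LinearCombinations.

Lemma raddf_lincomb (T U : zmodType) (f : {additive T -> U}) V v (e : nat -> T) :
  f (lincomb V v e) = lincomb V v (fun i => f (e i)).
Proof. by rewrite /lincomb raddf_sum; apply: eq_bigr => i _; rewrite raddfMz. Qed.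

Section TermsB.
Variables (TA TB TC : zmodType) (iota : {additive TA -> TB}) (g : {additive TB -> TC}).
Variables (LA : lang TA) (LC : lang TC).
Hypothesis g_iota : forall a, g (iota a) = 0.

Fixpoint linB (T : zmodType) (e : nat -> T) (t : termB LA) : T :=
  match t with
  | VB n => e n
  | ZB | IotaB _ => 0
  | AddB t1 t2 => linB e t1 + linB e t2
  | OppB t1 => - linB e t1
  end.

Fixpoint coefB (t : termB LA) (i : nat) : int :=
  match t with
  | VB n => (i == n)%:Z
  | ZB | IotaB _ => 0
  | AddB t1 t2 => coefB t1 i + coefB t2 i
  | OppB t1 => - coefB t1 i
  end.

Fixpoint sizeB (t : termB LA) : nat :=
  match t with
  | VB _ => 1
  | ZB | IotaB _ => 0
  | AddB t1 t2 => sizeB t1 + sizeB t2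
  | OppB t1 => sizeB t1
  end.

Fixpoint vars_belowB (V : nat) (t : termB LA) : bool :=
  match t with
  | VB n => (n < V)%N
  | ZB | IotaB _ => true
  | AddB t1 t2 => vars_belowB V t1 && vars_belowB V t2
  | OppB t1 => vars_belowB V t1
  end.

Lemma linB_lincomb (T : zmodType) V (e : nat -> T) t :
  vars_belowB V t -> linB e t = lincomb V (coefB t) e.
Proof.
elim: t => /= [n||t1 IH1 t2 IH2|t1 IH1|s].
- by move=> nV; rewrite lincomb_delta.
- by rewrite lincomb0l.
- by move=> /andP[V1 V2]; rewrite IH1 // IH2 // lincombDl.
- by move=> V1; rewrite IH1 // lincombNl.
- by rewrite lincomb0l.
Qed.

Lemma coefB_bound t i : (`|coefB t i| <= sizeB t)%N.
Proof. elim: t => /= [n||t1 IH1 t2 IH2|t1 IH1|s] //; [by case: eqP | lia | by rewrite abszN]. Qed.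

Lemma raddf_linB (T U : zmodType) (f : {additive T -> U}) (e : nat -> T) t :
  f (linB e t) = linB (fun i => f (e i)) t.
Proof. by elim: t => /= [n||t1 IH1 t2 IH2|t1 IH1|s]; rewrite ?raddf0 ?raddfD ?raddfN ?IH1 ?IH2. Qed.

Lemma evalB_shift eA eB eB' (a : nat -> TA) M t :
  (forall i, eB' i = eB i + iota (a i *+ M)) ->
  evalB iota eA eB' t = evalB iota eA eB t + iota (linB a t *+ M).
Proof.
move=> eBa; elim: t => /= [n||t1 IH1 t2 IH2|t1 IH1|s]; rewrite ?mul0rn ?raddf0 ?addr0 //.
- by rewrite IH1 IH2 mulrnDl raddfD addrACA.
- by rewrite IH1 mulNrn raddfN opprD.
Qed.

Lemma g_evalB eA eB t : g (evalB iota eA eB t) = linB (fun i => g (eB i)) t.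
Proof.
by elim: t => /= [n||t1 IH1 t2 IH2|t1 IH1|s]; rewrite ?raddf0 ?raddfD ?raddfN ?IH1 ?IH2 ?g_iota.
Qed.

Lemma evalC_congr eA eB eB' eC (t : termC LA LC) :
  (forall i, g (eB i) = g (eB' i)) ->
  evalC iota g eA eB eC t = evalC iota g eA eB' eC t.
Proof.
move=> geB; elim: t => /= [n||t1 IH1 t2 IH2|t1 IH1|f args IH|s]; rewrite ?IH1 ?IH2 //.
- by congr (finterp _); apply: functional_extensionality => i; rewrite IH.
- by rewrite !g_evalB; congr (linB _ s); apply: functional_extensionality.
Qed.

End TermsB.

Section Formulas.
Variables (TA TC : zmodType) (LA : lang TA) (LC : lang TC).

Fixpoint vars_below (V : nat) (p : formula LA LC) : Prop :=
  match p with
  | FEqB s t => vars_belowB V s && vars_belowB V t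
  | FNot p | FExA _ p | FExC _ p | FAllA _ p | FAllC _ p => vars_below V p
  | FAnd p q | FOr p q | FImp p q => vars_below V p /\ vars_below V q
  | FExB n p | FAllB n p => (n < V)%N /\ vars_below V p
  | _ => True
  end.

Fixpoint complexityB (p : formula LA LC) : nat :=
  match p with
  | FEqB s t => sizeB s + sizeB t
  | FDivB n _ => n.+1
  | FNot p | FExA _ p | FExC _ p | FAllA _ p | FAllC _ p => complexityB p
  | FAnd p q | FOr p q | FImp p q => maxn (complexityB p) (complexityB q)
  | FExB _ p | FAllB _ p => (complexityB p).+1
  | _ => 0
  end.

Lemma vars_belowB_exists (t : termB LA) :
  exists V, forall V', (V <= V')%N -> vars_belowB V' t.
Proof.
elim: t => /= [n||t1 [V1 H1] t2 [V2 H2]|t1 [V1 H1]|s]; try by exists 0%N.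
- by exists n.+1.
- by exists (maxn V1 V2) => V' HV; rewrite H1 ?H2 //; lia.
- by exists V1.
Qed.

Lemma vars_below_exists (p : formula LA LC) :
  exists V, forall V', (V <= V')%N -> vars_below V' p.
Proof.
elim: p => /= [|s t|s t|s t|r args|r args|n t|p [V1 H1]|p [V1 H1] q [V2 H2]
  |p [V1 H1] q [V2 H2]|p [V1 H1] q [V2 H2]|n p [V1 H1]|n p [V1 H1]|n p [V1 H1]
  |n p [V1 H1]|n p [V1 H1]|n p [V1 H1]]; try by [exists 0%N | exists V1].
- have [V1 H1] := vars_belowB_exists s; have [V2 H2] := vars_belowB_exists t.
  by exists (maxn V1 V2) => V' HV; rewrite H1 ?H2 //; lia.
- 1-3: by exists (maxn V1 V2) => V' HV; split; [apply: H1 | apply: H2]; lia.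
- 1,2: by exists (maxn V1 n.+1) => V' HV; split; [|apply: H1]; lia.
Qed.

End Formulas.

Definition grow (K B : nat) : nat := B + K + K * B.

Lemma leq_iter_grow K t B : (B <= iter t (grow K) B)%N.
Proof. by elim: t => //= t; set X := iter _ _ _; rewrite /grow; lia. Qed.

(* Coefficient bound and modulus that [shift_rel] needs in order to preserve formulas
   of [complexityB] c; the recursion mirrors the loss in [shift_rel_extend]. *)
Fixpoint bound_at (c : nat) : nat :=
  if c is c'.+1 then iter (bound_at c').+1 (grow (bound_at c')) (bound_at c') else 1.

Fixpoint modulus_at (c : nat) : nat :=
  if c is c'.+1 then modulus_at c' * (bound_at c')`! else 1.

Lemma leq_bound_atS c : (bound_at c <= bound_at c.+1)%N.
Proof. exact: leq_iter_grow. Qed.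

Lemma ltn_bound_at c : (c < bound_at c)%N.
Proof.
elim: c => // c IH; have := leq_iter_grow (bound_at c) (bound_at c) (bound_at c).
by rewrite /=; set X := iter _ _ _; rewrite /grow; lia.
Qed.

Lemma bound_at_mono c c' : (c <= c')%N -> (bound_at c <= bound_at c')%N.
Proof.
move=> /subnK <-; elim: (c' - c)%N => // d IH.
by rewrite addSn; apply: leq_trans IH (leq_bound_atS _).
Qed.

Lemma modulus_at_dvd c c' : (c <= c')%N -> (modulus_at c %| modulus_at c')%N.
Proof.
move=> /subnK <-; elim: (c' - c)%N => // d IH.
by rewrite addSn /=; apply: dvdn_trans IH (dvdn_mulr _ _).
Qed.

Lemma modulus_at_gt0 c : (0 < modulus_at c)%N.
Proof. by elim: c => //= c IH; rewrite muln_gt0 IH fact_gt0. Qed.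

Lemma dvdn_modulus_at n : (n.+1 %| modulus_at n.+1)%N.
Proof. by apply/dvdn_mull/dvdn_fact; have := ltn_bound_at n; lia. Qed.

Section ShiftRelation.
Variables (TA TB TC : zmodType) (iota : {additive TA -> TB}) (g : {additive TB -> TC}).
Variables (LA : lang TA) (LC : lang TC).
Hypothesis g_iota : forall a, g (iota a) = 0.
Variable V : nat.

Definition shift_rel (K M : nat) (eB eB' : nat -> TB) : Prop :=
  exists a : nat -> TA, (forall i, eB' i = eB i + iota (a i *+ M)) /\
    forall v, bounded V K v -> g (lincomb V v eB) = 0 -> lincomb V v a = 0.

Lemma g_lincomb_congr v (e e' : nat -> TB) : (forall i, g (e i) = g (e' i)) ->
  g (lincomb V v e) = g (lincomb V v e').
Proof. by move=> ge; rewrite !raddf_lincomb; apply: eq_lincombr. Qed.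

Lemma shift_rel_g K M eB eB' : shift_rel K M eB eB' -> forall i, g (eB i) = g (eB' i).
Proof. by move=> [a [eBa _]] i; rewrite eBa raddfD g_iota addr0. Qed.

Lemma shift_rel_sym K M eB eB' : shift_rel K M eB eB' -> shift_rel K M eB' eB.
Proof.
move=> rel; have geB := shift_rel_g rel; move: rel => [a [eBa a_rel]].
exists (fun i => - a i); split=> [i|v vK gv0]; first by rewrite eBa mulNrn raddfN addrK.
by rewrite lincombNr a_rel ?oppr0 // (g_lincomb_congr _ geB).
Qed.

Lemma shift_rel_weaken K M K' M' eB eB' : (K' <= K)%N -> (M' %| M)%N ->
  shift_rel K M eB eB' -> shift_rel K' M' eB eB'.
Proof.
move=> KK' /dvdnP[r ->] [a [eBa a_rel]]; exists (fun i => a i *+ r); split=> [i|v vK gv0].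
  by rewrite eBa mulrnA.
by rewrite lincombMnr a_rel ?mul0rn // => i /vK; lia.
Qed.

Lemma evalB_eq_shift K M (s t : termB LA) eA eB eB' :
  vars_belowB V s -> vars_belowB V t -> (sizeB s + sizeB t <= K)%N ->
  shift_rel K M eB eB' ->
  evalB iota eA eB s = evalB iota eA eB t -> evalB iota eA eB' s = evalB iota eA eB' t.
Proof.
move=> Vs Vt stK [a [eBa a_rel]] st; rewrite !(evalB_shift _ _ eBa) st.
congr (_ + iota (_ *+ _)); apply/eqP.
rewrite -subr_eq0 (linB_lincomb _ Vs) (linB_lincomb _ Vt) -lincombBl a_rel // => [i _|].
  by have := coefB_bound s i; have := coefB_bound t i; lia.
apply/eqP; rewrite lincombBl raddfB subr_eq0 -(linB_lincomb _ Vs) -(linB_lincomb _ Vt).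
by rewrite !raddf_linB -!(g_evalB g_iota eA) st.
Qed.

Lemma evalB_div_shift K M n (t : termB LA) eA eB eB' : (n.+1 %| M)%N ->
  shift_rel K M eB eB' ->
  (exists b, evalB iota eA eB t = b *+ n.+1) -> exists b, evalB iota eA eB' t = b *+ n.+1.
Proof.
move=> /dvdnP[r ->] [a [eBa _]] [b tb]; exists (b + iota (linB a t *+ r)).
by rewrite (evalB_shift _ _ eBa) tb mulrnA raddfMn mulrnDl.
Qed.

Lemma shift_rel_cong K M j e x y : (j < V)%N -> cong_nA iota M x y ->
  (forall v, bounded V K v -> g (lincomb V v (upd e j x)) = 0 -> v j = 0) ->
  shift_rel K M (upd e j x) (upd e j y).
Proof.
move=> jV [a0 xy] vj0; exists (upd (fun _ => 0) j (- a0)); split=> [i|v vK gv0].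
  rewrite /upd; case: eqP => _; last by rewrite mul0rn raddf0 addr0.
  by rewrite mulNrn raddfN -xy opprB addrC subrK.
by rewrite lincomb_upd // lincomb0r (vj0 v) // mulr0z addr0.
Qed.

Section Extension.
Variables (j K : nat) (eB : nat -> TB) (b : TB).

Definition relation_modA (B : nat) (v : nat -> int) : Prop :=
  bounded V B v /\ g (lincomb V v (upd eB j b)) = 0.

Lemma relation_modAN B v : relation_modA B v -> relation_modA B (fun i => - v i).
Proof.
by move=> [vB gv0]; split=> [i /vB|]; rewrite ?abszN // lincombNl raddfN gv0 oppr0.
Qed.

Lemma relation_modA_sub B v w (q : int) : relation_modA K w -> relation_modA B v ->
  (`|q| <= K)%N -> relation_modA (grow K B) (fun i => w i - q * v i).
Proof.
move=> [wK gw0] [vB gv0] qK; split=> [i iV|].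
  have := leqD_dist (w i) 0 (q * v i); rewrite subr0 sub0r abszN abszM.
  by have := wK i iV; have := vB i iV; rewrite /grow; nia.
by rewrite lincombBl lincombMzl raddfB raddfMz gw0 gv0 mul0rz subr0.
Qed.

Hypothesis jV : (j < V)%N.

(* Euclid's algorithm on the j-th coefficients: each division step replaces a relation
   by a combination of two, which enlarges the coefficient bound from B to [grow K B]. *)
Lemma relation_modA_divisor t : forall B v, relation_modA B v -> 0 < v j <= t%:Z ->
  exists v0 B', [/\ (B' <= iter t (grow K) B)%N, relation_modA B' v0,
    0 < v0 j <= t%:Z & forall w, relation_modA K w -> (v0 j %| w j)%Z].
Proof.
elim: t => [|t IH] B v rv /andP[vj_gt0 vj_le]; first by move: vj_gt0 vj_le; lia.
have [[w [rw ndiv]]|all_div] :=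
  classic (exists w, relation_modA K w /\ ~~ (v j %| w j)%Z); last first.
  exists v, B; split=> //; first exact: leq_iter_grow; first by rewrite vj_gt0.
  by move=> w rw; apply/negPn/negP => nd; apply: all_div; exists w.
have vj0 : v j != 0 by move: vj_gt0; lia.
have qK : (`|(w j %/ v j)%Z| <= K)%N by apply: leq_trans (lez_div _ _) _; apply: rw.1.
have ru := relation_modA_sub rw rv qK.
have uj : w j - (w j %/ v j)%Z * v j = (w j %% v j)%Z.
  by rewrite {1}(divz_eq (w j) (v j)) addrC addKr.
have uj_range : 0 < w j - (w j %/ v j)%Z * v j <= t%:Z.
  rewrite uj; apply/andP; split.
    by rewrite lt0r modz_ge0 // andbT; apply: contra ndiv => /eqP/dvdz_mod0P.
  by have := ltz_pmod (w j) vj_gt0; move: vj_le; lia.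
have [v0 [B' [B'le rv0 v0j v0div]]] := IH _ _ ru uj_range.
exists v0, B'; split=> //; first by rewrite iterSr.
by move: v0j; lia.
Qed.

Lemma shift_rel_extend M eB' :
  shift_rel (iter K.+1 (grow K) K) (M * K`!) eB eB' ->
  exists b', shift_rel K M (upd eB j b) (upd eB' j b').
Proof.
move=> [a [eBa a_rel]]; set L := K`!; pose aL i := a i *+ L.
have killed B u y : (B <= iter K.+1 (grow K) K)%N -> relation_modA B u -> u j = 0 ->
    lincomb V u (upd aL j y) = 0.
  move=> BK [uB gu0] uj; rewrite lincomb_upd0 // lincombMnr a_rel ?mul0rn //.
    by move=> i /uB; lia.
  by rewrite -(lincomb_upd0 _ _ b uj).
have [y y_kills] : exists y, forall v, relation_modA K v -> lincomb V v (upd aL j y) = 0.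
  have [[w [rw wj0]]|none] := classic (exists w, relation_modA K w /\ w j != 0); last first.
    exists 0 => v rv; have [vj0|vj0] := eqVneq (v j) 0.
      by apply: killed rv vj0; exact: leq_iter_grow.
    by exfalso; apply: none; exists v.
  have [w1 [rw1 w1j]] : exists w1, relation_modA K w1 /\ 0 < w1 j <= K%:Z.
    have := rw.1 j jV; case: (ltrP 0 (w j)) => [wj_gt0|wj_le0] wjK.
      by exists w; split=> //; apply/andP; split=> //; lia.
    by exists (fun i => - w i); split; [exact: relation_modAN | lia].
  have [v0 [B' [B'le rv0 /andP[v0j_gt0 v0j_le] v0div]]] := relation_modA_divisor rw1 w1j.
  have [k0 v0jE] : exists k0 : nat, v0 j = k0%:Z by exists `|v0 j|%N; lia.
  have k0L : (k0 %| L)%N by apply: dvdn_fact; lia.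
  (* All admissible coefficients of b are multiples of k0, so y only has to solve
     k0 y = - L X; this division is why the modulus loses the factor K`!. *)
  set X := lincomb V (upd v0 j 0) a; exists (- X *+ (L %/ k0)).
  have v0_killed : lincomb V v0 (upd aL j (- X *+ (L %/ k0))) = 0.
    by rewrite lincomb_upd // lincombMnr v0jE -pmulrn -mulrnA divnK // -/X mulNrn subrr.
  move=> v rv; have [q vjE] : exists q, v j = q * v0 j.
    by exists (v j %/ v0 j)%Z; rewrite divzK ?v0div.
  have qK : (`|q| <= K)%N.
    have := rv.1 j jV; rewrite vjE abszM; move: v0j_gt0; nia.
  have u_killed : lincomb V (fun i => v i - q * v0 i) (upd aL j (- X *+ (L %/ k0))) = 0.
    apply: killed (relation_modA_sub rv rv0 qK) _; last by rewrite vjE subrr.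
    by rewrite /=; move: B'le; set Z := iter _ _ _; rewrite /grow; nia.
  by move: u_killed; rewrite lincombBl lincombMzl v0_killed mul0rz subr0.
exists (b + iota (y *+ M)), (upd aL j y); split=> [i|v vK gv0]; last exact: y_kills.
by rewrite /upd; case: eqP => // _; rewrite eBa /aL -mulrnA mulnC.
Qed.

End Extension.

Lemma shift_rel_at_le c c' eB eB' : (c' <= c)%N ->
  shift_rel (bound_at c) (modulus_at c) eB eB' ->
  shift_rel (bound_at c') (modulus_at c') eB eB'.
Proof. by move=> cc'; apply: shift_rel_weaken; [apply: bound_at_mono | apply: modulus_at_dvd]. Qed.

Lemma holds_shift_rel (p : formula LA LC) : vars_below V p -> forall eA eB eB' eC,
  shift_rel (bound_at (complexityB p)) (modulus_at (complexityB p)) eB eB' ->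
  (holds iota g p eA eB eC <-> holds iota g p eA eB' eC).
Proof.
elim: p => /= [|s t|s t|s t|r args|r args|n t|p IH|p IHp q IHq|p IHp q IHq|p IHp q IHq
  |n p IH|n p IH|n p IH|n p IH|n p IH|n p IH] Vp eA eB eB' eC rel //.
- have stK := ltnW (ltn_bound_at (sizeB s + sizeB t)); case/andP: Vp => Vs Vt.
  by split; apply: evalB_eq_shift Vs Vt stK _; [exact: rel | exact: shift_rel_sym rel].
- by rewrite !(evalC_congr _ _ _ _ (shift_rel_g rel)).
- have geB := shift_rel_g rel.
  suff -> : (fun i => evalC iota g eA eB eC (args i)) = (fun i => evalC iota g eA eB' eC (args i)).
    by [].
  by apply: functional_extensionality => i; rewrite (evalC_congr _ _ _ _ geB).
- have dvd_n := dvdn_modulus_at n.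
  by split; apply: evalB_div_shift dvd_n _; [exact: rel | exact: shift_rel_sym rel].
- by rewrite (IH Vp eA eB eB' eC rel).
- 1-3: case: Vp => Vp Vq; rewrite (IHp Vp eA eB eB' eC) ?(IHq Vq eA eB eB' eC) //;
    by apply: shift_rel_at_le rel; rewrite ?leq_maxl ?leq_maxr.
- by split=> -[x Hx]; exists x; move: Hx; rewrite (IH Vp _ eB eB' eC rel).
- case: Vp => nV Vp; split=> -[x Hx].
    have [y rel'] := shift_rel_extend x nV rel.
    by exists y; rewrite -(IH Vp _ _ _ _ rel').
  have [y rel'] := shift_rel_extend x nV (shift_rel_sym rel).
  by exists y; rewrite -(IH Vp _ _ _ _ rel').
- by split=> -[x Hx]; exists x; move: Hx; rewrite (IH Vp _ eB eB' _ rel).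
- by split=> Hx x; move: (Hx x); rewrite (IH Vp _ eB eB' eC rel).
- case: Vp => nV Vp; split=> Hx x.
    have [y rel'] := shift_rel_extend x nV (shift_rel_sym rel).
    by rewrite (IH Vp _ _ _ _ rel').
  have [y rel'] := shift_rel_extend x nV rel.
  by rewrite (IH Vp _ _ _ _ rel').
- by split=> Hx x; move: (Hx x); rewrite (IH Vp _ eB eB' _ rel).
Qed.

End ShiftRelation.

Lemma finite_quot_pure (U W : zmodType) (f : {additive U -> W}) n :
  (forall u d, f u = d *+ n -> exists u', u = u' *+ n) ->
  finite_quot_nB W n -> finite_quot_nB U n.
Proof.
move=> pure [sW sW_reps]; suff [sU sU_reps] : exists sU : seq U, forall u,
    (exists2 c, c \in sW & exists d, f u - c = d *+ n) ->
    exists2 u', u' \in sU & exists d, u - u' = d *+ n.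
  by exists sU => u; apply/sU_reps/sW_reps.
elim: sW {sW_reps} => [|c sW [sU sU_reps]]; first by exists [::] => u [].
have [[u0 [d0 u0c]]|none] := classic (exists u0 d0, f u0 - c = d0 *+ n).
  exists (u0 :: sU) => u [c' /[!inE] /orP[/eqP -> [d uc]|c'W uc']].
    exists u0; rewrite ?inE ?eqxx //; apply: (pure _ (d - d0)).
    by rewrite raddfB mulrnBl -uc -u0c opprB addrA subrK.
  have [u' u'U uu'] := sU_reps u (ex_intro2 _ _ c' c'W uc').
  by exists u' => //; rewrite inE u'U orbT.
exists sU => u [c' /[!inE] /orP[/eqP -> uc|c'W uc']].
  by case: none; exists u.
exact: sU_reps (ex_intro2 _ _ c' c'W uc').
Qed.

Section FiniteClasses.
Variables (TA TB TC : zmodType) (iota : {additive TA -> TB}) (g : {additive TB -> TC}).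
Variable n : nat.

Definition finite_classes (Z : TB -> Prop) : Prop :=
  exists s : seq TB, forall x, Z x -> exists2 c, c \in s & cong_nA iota n x c.

Lemma finite_classes_sub (Z Z' : TB -> Prop) :
  (forall x, Z x -> Z' x) -> finite_classes Z' -> finite_classes Z.
Proof. by move=> ZZ' [s Z's]; exists s => x /ZZ' /Z's. Qed.

Lemma finite_classes_union (Z Z' : TB -> Prop) :
  finite_classes Z -> finite_classes Z' -> finite_classes (fun x => Z x \/ Z' x).
Proof.
move=> [s Zs] [s' Z's']; exists (s ++ s') => x [/Zs|/Z's'] [c cs xc];
  by exists c; rewrite // mem_cat cs ?orbT.
Qed.

Lemma finite_classes_int K (G : int -> TB -> Prop) : (forall z, finite_classes (G z)) ->
  finite_classes (fun x => exists z, (`|z| <= K)%N /\ G z x).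
Proof.
move=> G_fin; elim: K => [|K IH].
  by apply: finite_classes_sub (G_fin 0) => x [z [z0]]; have -> : z = 0 by lia.
apply: finite_classes_sub
  (finite_classes_union IH (finite_classes_union (G_fin K.+1%:Z) (G_fin (- K.+1%:Z)))).
move=> x [z [zK Gzx]].
have [zK'|[zE|zE]] : (`|z| <= K)%N \/ z = K.+1%:Z \/ z = - K.+1%:Z by lia.
- by left; exists z.
- by right; left; rewrite -zE.
- by right; right; rewrite -zE.
Qed.

Lemma finite_classes_vec K W (F : (nat -> int) -> TB -> Prop) :
  (forall v, finite_classes (F v)) ->
  (forall v w x, (forall i, (i < W)%N -> v i = w i) -> F v x -> F w x) ->
  finite_classes (fun x => exists v, bounded W K v /\ F v x).
Proof.
elim: W F => [|W IH] F F_fin F_local.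
  by apply: finite_classes_sub (F_fin (fun _ => 0)) => x [v [_]]; apply: F_local.
pose F' v x := exists z, (`|z| <= K)%N /\ F (upd v W z) x.
have F'_fin v : finite_classes (F' v).
  exact: finite_classes_int (fun z => F_fin (upd v W z)).
have F'_local v w x : (forall i, (i < W)%N -> v i = w i) -> F' v x -> F' w x.
  move=> vw [z [zK Fx]]; exists z; split=> //; apply: F_local Fx => i iW.
  by rewrite /upd; case: eqP => // iW'; apply: vw; lia.
apply: finite_classes_sub (IH F' F'_fin F'_local) => x [v [vK Fvx]].
exists v; split=> [i iW|]; first by apply: vK; lia.
exists (v W); split; first exact: vK.
by apply: F_local Fvx => i _; rewrite /upd; case: eqP => // ->.
Qed.

Hypothesis iota_inj : injective iota.
Hypothesis exact_mid : forall b : TB, g b = 0 <-> exists a : TA, b = iota a.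
Hypothesis C_torsion_free : forall (c : TC) (m : nat), (0 < m)%N -> c *+ m = 0 -> c = 0.

Lemma torsion_freeMz (c : TC) (k : int) : k != 0 -> c *~ k = 0 -> c = 0.
Proof.
case: k => [m|m] k0 ck0; first by apply: (C_torsion_free (m := m)); [lia | rewrite pmulrn].
apply: (C_torsion_free (m := m.+1)) => //.
by apply/eqP; rewrite -oppr_eq0 pmulrn -mulrNz -NegzE ck0.
Qed.

Hypothesis n_gt0 : (0 < n)%N.
Hypothesis B_fin : finite_quot_nB TB n.

Lemma iota_pure a d : iota a = d *+ n -> exists a', a = a' *+ n.
Proof.
move=> ad; have /exact_mid[a' da'] : g d = 0.
  by apply: (C_torsion_free n_gt0); rewrite -raddfMn -ad; apply/exact_mid; exists a.
by exists a'; apply: iota_inj; rewrite ad da' raddfMn.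
Qed.

Lemma finite_classes_coset x0 : finite_classes (fun x => g (x - x0) = 0).
Proof.
have [sA sA_reps] := finite_quot_pure iota_pure B_fin.
exists [seq x0 + iota a' | a' <- sA] => x /exact_mid[a xa].
have [a' a'A [d aa']] := sA_reps a; exists (x0 + iota a'); first exact: map_f.
by exists d; rewrite opprD addrA xa -raddfB aa'.
Qed.

Lemma finite_classes_fiber V (e : nat -> TB) (v : nat -> int) : (0 < V)%N ->
  finite_classes (fun x => v 0%N != 0 /\ g (lincomb V v (upd e 0 x)) = 0).
Proof.
move=> V_gt0.
have [[x0 [v0 gx0]]|none] :=
  classic (exists x0, v 0%N != 0 /\ g (lincomb V v (upd e 0 x0)) = 0).
  apply: finite_classes_sub (finite_classes_coset x0) => x [_ gx].
  apply: (torsion_freeMz v0); rewrite -raddfMz mulrzBl raddfB.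
  apply/eqP; rewrite subr_eq0; apply/eqP.
  move: gx gx0; rewrite !lincomb_upd // !raddfD => gx gx0.
  by apply: (addrI (g (lincomb V (upd v 0 0) e))); rewrite gx gx0.
by exists [::] => x vx; case: none; exists x.
Qed.

End FiniteClasses.

Unset Implicit Arguments.

Theorem lemma2p36 (TA TB TC : zmodType)
  (iota : {additive TA -> TB}) (g : {additive TB -> TC})
  (LA : lang TA) (LC : lang TC)
  (iota_inj : injective iota)
  (exact_mid : forall b : TB, g b = 0 <-> exists a : TA, b = iota a)
  (g_surj : forall c : TC, exists b : TB, g b = c)
  (C_torsion_free : forall (c : TC) (n : nat), (0 < n)%N -> c *+ n = 0 -> c = 0)
  (B_fin : forall n : nat, (0 < n)%N -> finite_quot_nB TB n)
  (X : TB -> Prop)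
  (X_def : definableB iota g LA LC X) :
  exists2 n : nat, (0 < n)%N &
    almost_saturated_rel (cong_nA iota n) X.
Proof.
have g_iota a : g (iota a) = 0 by apply/exact_mid; exists a.
have [phi [pA [pB [pC X_phi]]]] := X_def.
have [V0 V0_phi] := vars_below_exists phi; set V := maxn V0 1.
have V_phi : vars_below V phi := V0_phi _ (leq_maxl _ _).
have V_gt0 : (0 < V)%N := leq_maxr _ _.
set K := bound_at (complexityB phi); set n := modulus_at (complexityB phi).
have n_gt0 : (0 < n)%N := modulus_at_gt0 _.
exists n => //.
have [s s_classes] : finite_classes iota n (fun x => exists v, bounded V K v /\
    (v 0%N != 0 /\ g (lincomb V v (upd pB 0 x)) = 0)).
  apply: finite_classes_vec => [v|v w x vw [v0 gv0]].
    exact: finite_classes_fiber iota_inj exact_mid C_torsion_free n_gt0 (B_fin _ n_gt0)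
      V pB v V_gt0.
  by rewrite -(vw 0%N V_gt0) -(eq_lincombl _ vw).
exists s => x y Xx nXy xy; apply: s_classes; apply: NNPP => x_generic; apply: nXy.
have rel : shift_rel iota g V K n (upd pB 0 x) (upd pB 0 y).
  apply: shift_rel_cong V_gt0 xy _ => v vK gv0; have [//|v0] := eqVneq (v 0%N) 0.
  by case: x_generic; exists v.
by apply/X_phi; rewrite -(holds_shift_rel g_iota V_phi pA pC rel); apply/X_phi.
Qed.
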